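(* Consider the SBCM on the path graph $P_n$ ($n\ge1$) with nodes $1,\ldots,n+2$ in a path, zealots at nodes $1$ and $n+2$ with opinions $-(n+1)/2$ and $(n+1)/2$, and persuadable nodes $2,\ldots,n+1$; let $\bar{\mathbf{x}}$ be the harmonic state $\bar x_k=k-\frac{n+3}{2}$. Let $y$ be the unique negative real solution of $e^{y-2}=y^2/4$. Then: (1) If $\delta\in[0,1]$, there exists $\gamma_c>0$ such that $\bar{\mathbf{x}}$ is linearly stable for all $\gamma\in[0,\gamma_c)$ and linearly unstable for all $\gamma>\gamma_c$; moreover $\gamma_c=1$ when $\delta=1$. (2) If $\delta\in(1,1-y)$, there exist $\gamma_1,\gamma_2>0$ such that $\bar{\mathbf{x}}$ is linearly unstable if and only if $\gamma\in(\gamma_1,\gamma_2)$, and is linearly stable if $\gamma<\gamma_1$ or $\gamma>\gamma_2$. (3) If $\delta>1-y$, then $\bar{\mathbf{x}}$ is linearly stable for all $\gamma>0$.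
   Context: The SBCM with parameters $\gamma,\delta\ge0$ on a graph with zealots $\mathcal{Z}$ and persuadable nodes $\mathcal{P}$: with $w(x_i,x_j)=\frac{1}{1+e^{\gamma(x_i-x_j)^2-\gamma\delta}}$ for adjacent $i\sim j$ and $0$ otherwise, the dynamics are $\frac{dx_i}{dt}=f_i(\mathbf{x})=\frac{\sum_j w(x_i,x_j)(x_j-x_i)}{\sum_j w(x_i,x_j)}$ for $i\in\mathcal{P}$ and $\frac{dx_i}{dt}=0$ for zealots. The state $\bar{\mathbf{x}}$ is a steady state for every $\gamma$. A steady state is linearly stable if all eigenvalues of $\mathbf{J}_{\mathcal{P}}=(\partial f_i/\partial x_j)_{i,j\in\mathcal{P}}$ at it are strictly negative, and linearly unstable if $\mathbf{J}_{\mathcal{P}}$ has a strictly positive eigenvalue. *)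

From HB Require Import structures.
From mathcomp Require Import all_boot all_order all_algebra.
From mathcomp Require Import all_classical all_reals all_analysis.
From mathcomp Require Import complex.
Set Implicit Arguments. Unset Strict Implicit. Unset Printing Implicit Defensive.
Import Order.TTheory GRing.Theory Num.Theory.
Local Open Scope ring_scope.

Definition sbcm_w {R : realType} (gamma delta xi xj : R) : R :=
  1 / (1 + expR (gamma * (xi - xj) ^+ 2 - gamma * delta)).

Definition sbcm_f {R : realType} (m : nat) (adj : rel 'I_m) (gamma delta : R)
    (x : 'I_m -> R) (i : 'I_m) : R :=
  (\sum_(j < m) (if adj i j then sbcm_w gamma delta (x i) (x j) else 0) * (x j - x i))
  / (\sum_(j < m) (if adj i j then sbcm_w gamma delta (x i) (x j) else 0)).

(* Path graph on nodes 0,...,n+1 (paper's nodes 1,...,n+2) *)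
Definition path_adj (n : nat) : rel 'I_n.+2 :=
  fun i j => (i.+1 == j :> nat) || (j.+1 == i :> nat).

(* persuadable node p (0-indexed in 'I_n) is node p+1 (paper's node p+2) *)
Definition pers (n : nat) (p : 'I_n) : 'I_n.+2 := lift ord0 (widen_ord (leqnSn n) p).

(* harmonic state: paper's node k has value k - (n+3)/2; our 0-indexed node k is paper node k+1 *)
Definition harmonic_state {R : realType} (n : nat) (k : 'I_n.+2) : R :=
  (k.+1)%:R - (n%:R + 3) / 2.

Definition jacP {R : realType} (n : nat) (gamma delta : R) (xb : 'I_n.+2 -> R)
  : 'M[R]_n :=
  \matrix_(i < n, j < n)
    derive1 (fun t : R => sbcm_f (@path_adj n) gamma delta
        (fun k => xb k + (if k == pers j then t else 0)) (pers i)) 0.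

Definition eigenvalues_of {R : realType} (n : nat) (J : 'M[R]_n) : pred R[i] :=
  fun z => root (map_poly (fun r : R => (r%:C)%C) (char_poly J)) z.

Definition lin_stable {R : realType} (n : nat) (J : 'M[R]_n) : Prop :=
  forall z : R[i], eigenvalues_of J z -> z < 0.

Definition lin_unstable {R : realType} (n : nat) (J : 'M[R]_n) : Prop :=
  exists z : R[i], eigenvalues_of J z /\ 0 < z.

From mathcomp Require Import all_boot all_order all_algebra.
From mathcomp Require Import all_classical all_reals all_analysis.
From mathcomp Require Import complex ring lra.
Set Implicit Arguments.
Unset Strict Implicit.
Unset Printing Implicit Defensive.
Import Order.TTheory GRing.Theory Num.Theory numFieldNormedType.Exports.
Local Open Scope ring_scope.

(* At the harmonic state every persuadable node sees both neighbours at distance 1, so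
   the two weights agree and J_P = a L, with L = tridiag(1, -2, 1) the Dirichlet
   Laplacian of the path, a = (1 - h(γ)) / (2 (1 + e^{γ(1-δ)})) and
   h(γ) = (2γ - 1) e^{γ(1-δ)}.  Since L = -D D^T with D of full row rank, every eigenvalue
   of a L is real with the sign of -a, so the state is stable iff h(γ) < 1 and unstable
   iff h(γ) > 1.  For δ <= 1, h increases on [1/2, oo) from h(1/2) = 0 past h(1) >= 1.
   For δ > 1, h increases up to p = 1/2 + 1/(δ-1) and then decreases to 0, and
   h(p) = 2/(δ-1) e^{-(δ-1)/2 - 1} exceeds 1 exactly when δ < 1 - y, because
   e^{y/2 - 1} = -y/2. *)

Lemma sum_nat_eq_mul {K : pzSemiRingType} {m a : nat} (F : nat -> K) : (a < m)%N ->
  \sum_(k < m) (a == k :> nat)%:R * F k = F a.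
Proof.
move=> am; rewrite (bigD1 (Ordinal am)) //= eqxx mul1r big1 ?addr0 // => k.
by rewrite -val_eqE eq_sym => /negbTE /= ->; rewrite mul0r.
Qed.

Section RealGram.
Variable R : realType.
Local Notation C := R[i].
Local Notation toC := (real_complex R).
Local Open Scope complex_scope.

Local Notation sqmod x := (complex.Re x ^+ 2 + complex.Im x ^+ 2).

Lemma mulc_conjE (x : C) : x * x^* = (sqmod x)%:C.
Proof. by rewrite add_Re2_Im2 sqr_normc. Qed.

Lemma sqmod_gt0 (x : C) : x != 0 -> 0 < sqmod x.
Proof.
move=> x0; have : 0 < `|x| ^+ 2 by rewrite exprn_gt0 // normr_gt0.
by rewrite -add_Re2_Im2 ltcE /= => /andP [].
Qed.

Lemma rV_conj_form (n : nat) (v : 'rV[C]_n) :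
  (v *m (map_mx (@conjc R) v)^T) 0 0 = (\sum_k sqmod (v 0 k))%:C.
Proof.
rewrite !mxE rmorph_sum; apply: eq_bigr => k _.
by rewrite !mxE mulc_conjE.
Qed.

Lemma rV_conj_form_gt0 (n : nat) (v : 'rV[C]_n) : v != 0 ->
  0 < \sum_k sqmod (v 0 k).
Proof.
move=> v0; have [k vk0] : exists k, v 0 k != 0.
  apply/existsP; apply: contraR v0; rewrite negb_exists => /forallP v0.
  by apply/eqP/rowP => k; rewrite mxE; apply/eqP/negbNE/v0.
rewrite (bigD1 k) //= ltr_pwDl ?sqmod_gt0 ?sumr_ge0 // => i _.
by rewrite addr_ge0 ?sqr_ge0.
Qed.

Lemma eigenvalue_scaled_gram (m n : nat) (a : R) (B : 'M[R]_(n, m)) (z : C) :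
  row_free B -> eigenvalue (map_mx toC (a *: (B *m B^T))) z ->
  exists2 q : R, 0 < q & z = (a * q)%:C.
Proof.
move=> Bfree /eigenvalueP [v vM v0].
set Bc := map_mx toC B.
have conjBc : map_mx (@conjc R) Bc = Bc.
  by apply/matrixP => i j; rewrite !mxE conjc_real.
set w := v *m Bc.
have w0 : w != 0.
  have Bcfree : row_free Bc by rewrite row_free_map.
  apply: contraNneq v0 => vB0.
  by apply/eqP; apply: (row_free_inj Bcfree); rewrite /= mul0mx.
(* Rayleigh quotient: z |v|^2 = a |v B|^2. *)
have form : (v *m map_mx toC (a *: (B *m B^T))) *m (map_mx (@conjc R) v)^T
          = a%:C *: (w *m (map_mx (@conjc R) w)^T).
  have BcT : map_mx toC B^T = Bc^T by apply/matrixP => i j; rewrite !mxE.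
  rewrite map_mxZ map_mxM BcT /w map_mxM conjBc trmx_mul.
  by rewrite -scalemxAr -scalemxAl !mulmxA.
move: form; rewrite vM -scalemxAl => /(congr1 (fun M : 'M[C]_(1, 1) => M 0 0)) /=.
rewrite [LHS]mxE [RHS]mxE !rV_conj_form -rmorphM => form.
set sv := \sum_k _ in form; set sw := \sum_k _ in form.
have [sv_gt0 sw_gt0] : 0 < sv /\ 0 < sw by rewrite !rV_conj_form_gt0.
exists (sw / sv); first exact: divr_gt0.
apply: (mulIf (x := sv%:C)); first by rewrite eq_complex /= negb_and lt0r_neq0.
by rewrite form -rmorphM mulrA divfK ?lt0r_neq0.
Qed.

End RealGram.

Section PathLaplacian.
Variable R : realType.
Local Open Scope complex_scope.

Definition lap_mx (n : nat) : 'M[R]_n := \matrix_(i, j)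
  ((i == j.+1 :> nat)%:R + (i.+1 == j :> nat)%:R - 2 * (i == j :> nat)%:R).

Definition diff_mx (n : nat) : 'M[R]_(n, n.+1) := \matrix_(i, k)
  ((i == k :> nat)%:R - (i.+1 == k :> nat)%:R).

Lemma diff_mx_free (n : nat) : row_free (diff_mx n).
Proof.
apply/row_freeP; exists (\matrix_(k < n.+1, j < n) ((k <= j)%N)%:R).
apply/matrixP => i j; rewrite !mxE.
under eq_bigr => k _ do rewrite !mxE mulrBl.
rewrite sumrB !(sum_nat_eq_mul (fun k => ((k <= j)%N)%:R : R))
  ?ltnS ?(ltnW (ltn_ord i)) //.
by rewrite -val_eqE /=; case: ltngtP; rewrite ?subrr ?subr0.
Qed.

Lemma lap_mx_gram (n : nat) : lap_mx n = - (diff_mx n *m (diff_mx n)^T).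
Proof.
apply/matrixP => i j; rewrite !mxE.
under eq_bigr => k _ do rewrite !mxE mulrBl.
set Dj := fun k => ((j == k :> nat)%:R - (j.+1 == k :> nat)%:R) : R.
rewrite sumrB !(sum_nat_eq_mul Dj) ?ltnS ?(ltnW (ltn_ord i)) // /Dj.
rewrite eqSS [(j == i :> nat)]eq_sym [(j.+1 == i :> nat)]eq_sym [(j == i.+1 :> nat)]eq_sym.
ring.
Qed.

Lemma eigenvalues_ofE (n : nat) (J : 'M[R]_n) (z : R[i]) :
  eigenvalues_of J z = eigenvalue (map_mx (real_complex R) J) z.
Proof. by rewrite eigenvalue_root_char -map_char_poly. Qed.

Lemma eigenvalue_scaled_lap (n : nat) (a : R) (z : R[i]) :
  eigenvalues_of (a *: lap_mx n) z -> exists2 q : R, 0 < q & z = (- a * q)%:C.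
Proof.
rewrite eigenvalues_ofE lap_mx_gram scalerN -scaleNr.
exact: eigenvalue_scaled_gram (diff_mx_free n).
Qed.

Lemma lin_stable_scaled_lap (n : nat) (a : R) : 0 < a -> lin_stable (a *: lap_mx n).
Proof.
move=> a0 z /eigenvalue_scaled_lap [q q0 ->].
by rewrite ltcE /= eqxx mulNr oppr_lt0 mulr_gt0.
Qed.

Lemma lin_unstable_scaled_lap (n : nat) (a : R) :
  (0 < n)%N -> a < 0 -> lin_unstable (a *: lap_mx n).
Proof.
move=> n0 a0.
have [z z_eig] : exists z, eigenvalues_of (a *: lap_mx n) z.
  by apply/closed_rootP; rewrite size_map_poly size_char_poly; case: n n0.
exists z; split => //; have [q q0 ->] := eigenvalue_scaled_lap z_eig.
by rewrite ltcE /= eqxx mulr_gt0 ?oppr_gt0.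
Qed.

Lemma lin_unstable_scaled_lap_neg (n : nat) (a : R) :
  lin_unstable (a *: lap_mx n) -> a < 0.
Proof.
case=> z [/eigenvalue_scaled_lap [q q0 ->]].
by rewrite ltcE /= eqxx pmulr_lgt0 // oppr_gt0.
Qed.

End PathLaplacian.

(* The library rules is_deriveD/B/M are stated for the operations of the function ring,
   which unification does not match against lambda terms; is_deriveV must get [f] from
   the derivative hypothesis rather than from [f x != 0]. *)
Section PointwiseDerive.
Variable R : realType.
Implicit Types (f h : R -> R) (x a b : R).

Lemma is_deriveD_pt f h x a b : is_derive x 1 f a -> is_derive x 1 h b ->
  is_derive x 1 (fun t => f t + h t) (a + b).
Proof. exact: is_deriveD. Qed.

Lemma is_deriveB_pt f h x a b : is_derive x 1 f a -> is_derive x 1 h b ->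
  is_derive x 1 (fun t => f t - h t) (a - b).
Proof. exact: is_deriveB. Qed.

Lemma is_deriveM_pt f h x a b : is_derive x 1 f a -> is_derive x 1 h b ->
  is_derive x 1 (fun t => f t * h t) (f x * b + h x * a).
Proof. exact: is_deriveM. Qed.

Lemma is_deriveV_pt f x a : is_derive x 1 f a -> f x != 0 ->
  is_derive x 1 (fun t => (f t)^-1) (- (f x) ^- 2 * a).
Proof. by move=> df fx0; apply: is_deriveV. Qed.

Lemma is_derive_expR_comp f x a : is_derive x 1 f a ->
  is_derive x 1 (fun t => expR (f t)) (expR (f x) * a).
Proof. exact: is_derive1_comp. Qed.

End PointwiseDerive.

Definition stab_index (R : realType) (d g : R) : R := (2 * g - 1) * expR (g - g * d).

Section LocalDerivative.
Variables (R : realType) (g d : R).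

Definition jac_coef : R := (1 - stab_index d g) / (2 * (1 + expR (g - g * d))).

Definition sbcm_f_deg2 (xp xl xr : R) : R :=
  (sbcm_w g d xp xl * (xl - xp) + sbcm_w g d xp xr * (xr - xp))
  / (sbcm_w g d xp xl + sbcm_w g d xp xr).

Lemma sbcm_w_gt0 (xi xj : R) : 0 < sbcm_w g d xi xj.
Proof. by rewrite divr_gt0 // ltr_pwDl ?expR_gt0. Qed.

Lemma is_derive_sbcm_w (p q : R -> R) (x kp kq : R) :
  is_derive x 1 p kp -> is_derive x 1 q kq ->
  is_derive x 1 (fun t => sbcm_w g d (p t) (q t))
    (- 2 * g * (p x - q x) * expR (g * (p x - q x) ^+ 2 - g * d)
     / (1 + expR (g * (p x - q x) ^+ 2 - g * d)) ^+ 2 * (kp - kq)).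
Proof.
move=> dp dq.
have -> : (fun t => sbcm_w g d (p t) (q t)) =
    (fun t => (1 + expR (g * ((p t - q t) * (p t - q t)) - g * d))^-1).
  by apply/funext => t; rewrite /sbcm_w div1r expr2.
have du := is_deriveB_pt dp dq.
have dexp := is_derive_expR_comp (is_deriveB_pt
  (is_deriveM_pt (is_derive_cst g x 1) (is_deriveM_pt du du)) (is_derive_cst (g * d) x 1)).
have E0 : 1 + expR (g * ((p x - q x) * (p x - q x)) - g * d) != 0.
  by rewrite gt_eqF // ltr_pwDl ?expR_gt0.
apply: is_derive_eq (is_deriveV_pt (is_deriveD_pt (is_derive_cst (1 : R) x 1) dexp) E0) _.
rewrite /cst -!expr2 in E0 *.
by field.
Qed.

Lemma is_derive_sbcm_f_deg2 (p l r : R -> R) (x kp kl kr : R) :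
  is_derive x 1 p kp -> is_derive x 1 l kl -> is_derive x 1 r kr ->
  l x = p x - 1 -> r x = p x + 1 ->
  is_derive x 1 (fun t => sbcm_f_deg2 (p t) (l t) (r t)) (jac_coef * (kl + kr - 2 * kp)).
Proof.
move=> dp dl dr lx rx.
have wl := is_derive_sbcm_w dp dl; have wr := is_derive_sbcm_w dp dr.
have dnum := is_deriveD_pt (is_deriveM_pt wl (is_deriveB_pt dl dp))
                           (is_deriveM_pt wr (is_deriveB_pt dr dp)).
have den0 : sbcm_w g d (p x) (l x) + sbcm_w g d (p x) (r x) != 0.
  by rewrite gt_eqF // addr_gt0 ?sbcm_w_gt0.
apply: is_derive_eq (is_deriveM_pt dnum (is_deriveV_pt (is_deriveD_pt wl wr) den0)) _.
rewrite lx rx /sbcm_w /jac_coef /stab_index.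
have -> : p x - (p x - 1) = 1 by ring.
have -> : p x - (p x + 1) = -1 by ring.
rewrite sqrrN expr1n mulr1.
have e0 : 1 + expR (g - g * d) != 0 by rewrite gt_eqF // ltr_pwDl ?expR_gt0.
by field.
Qed.

End LocalDerivative.

Section HarmonicJacobian.
Variable R : realType.

Lemma sum_path_adj (n : nat) (i : 'I_n) (F : 'I_n.+2 -> R) :
  \sum_(k < n.+2) (if path_adj (pers i) k then F k else 0) = F (inord i) + F (inord i.+2).
Proof.
have [i_lt i2_lt] : (i < n.+2)%N /\ (i.+2 < n.+2)%N by rewrite !ltnS ltnW ?leqW.
rewrite (bigD1 (inord i)) /= ?/path_adj ?inordK ?eqxx ?orbT //.
rewrite (bigD1 (inord i.+2)) /= -?val_eqE /= ?inordK ?eqxx // ?gtn_eqF //.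
rewrite big1 ?addr0 // => k /andP [ki ki2]; case: ifP => // /orP [] /eqP ik.
- by move: ki2; rewrite -val_eqE /= inordK // -ik eqxx.
- by move: ki; rewrite -val_eqE /= inordK //; case: ik => ->; rewrite eqxx.
Qed.

Lemma sbcm_f_path (n : nat) (g d : R) (x : 'I_n.+2 -> R) (i : 'I_n) :
  sbcm_f (@path_adj n) g d x (pers i)
  = sbcm_f_deg2 g d (x (pers i)) (x (inord i)) (x (inord i.+2)).
Proof.
rewrite /sbcm_f.
under eq_bigr => k _ do rewrite (fun_if (fun w => w * (x k - x (pers i)))) mul0r.
by rewrite !sum_path_adj.
Qed.

Lemma is_derive_shift (c x : R) (b : bool) :
  is_derive x 1 (fun t => c + (if b then t else 0)) b%:R.
Proof.
have dc := is_derive_cst c x 1.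
case: b.
- exact: is_derive_eq (is_deriveD_pt dc (is_derive_id x 1)) (add0r _).
- exact: is_derive_eq (is_deriveD_pt dc (is_derive_cst 0 x 1)) (addr0 _).
Qed.

Lemma harmonic_state_succ (n : nat) (k k' : 'I_n.+2) :
  k' = k.+1 :> nat -> harmonic_state k' = harmonic_state k + 1 :> R.
Proof. by rewrite /harmonic_state => ->; rewrite mulrS; ring. Qed.

Lemma jacP_harmonic (n : nat) (g d : R) :
  jacP g d (@harmonic_state R n) = jac_coef g d *: lap_mx R n.
Proof.
apply/matrixP => i j; rewrite !mxE derive1E.
under eq_fun => t do rewrite sbcm_f_path.
have [i_lt i2_lt] : (i < n.+2)%N /\ (i.+2 < n.+2)%N by rewrite !ltnS ltnW ?leqW.
rewrite (@derive_val _ _ _ _ _ _ _ (is_derive_sbcm_f_deg2 g d (is_derive_shift _ _ _)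
  (is_derive_shift _ _ _) (is_derive_shift _ _ _) _ _)); last 2 first.
- rewrite !if_same !addr0 (@harmonic_state_succ _ (inord i) (pers i)) ?inordK //.
  by rewrite addrK.
- by rewrite !if_same !addr0 (@harmonic_state_succ _ (pers i) (inord i.+2)) ?inordK.
congr (_ * (_ + _ - 2 * _)); rewrite -val_eqE /= ?inordK //.
Qed.

End HarmonicJacobian.

Section HarmonicStability.
Variable R : realType.

Lemma jac_coef_gt0 (g d : R) : (0 < jac_coef g d) = (stab_index d g < 1).
Proof.
by rewrite /jac_coef pmulr_lgt0 ?subr_gt0 // invr_gt0 mulr_gt0 // ltr_pwDl ?expR_gt0.
Qed.

Lemma jac_coef_lt0 (g d : R) : (jac_coef g d < 0) = (1 < stab_index d g).
Proof.
by rewrite /jac_coef pmulr_llt0 ?subr_lt0 // invr_gt0 mulr_gt0 // ltr_pwDl ?expR_gt0.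
Qed.

Lemma harmonic_stable (n : nat) (g d : R) :
  stab_index d g < 1 -> lin_stable (jacP g d (@harmonic_state R n)).
Proof. by rewrite jacP_harmonic -jac_coef_gt0; apply: lin_stable_scaled_lap. Qed.

Lemma harmonic_unstableE (n : nat) (g d : R) : (0 < n)%N ->
  lin_unstable (jacP g d (@harmonic_state R n)) <-> 1 < stab_index d g.
Proof.
rewrite jacP_harmonic -jac_coef_lt0; split; first exact: lin_unstable_scaled_lap_neg.
exact: lin_unstable_scaled_lap.
Qed.

End HarmonicStability.

Section StabIndex.
Variables (R : realType) (d : R).
Local Notation h := (stab_index d).

Definition stab_peak : R := 2^-1 + (d - 1)^-1.

Lemma stab_index_continuous : continuous (h : R -> R).
Proof.
move=> x; have dx := is_derive_id x 1.
have d_lin := is_deriveB_pt (is_deriveM_pt (is_derive_cst (2 : R) x 1) dx)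
                            (is_derive_cst (1 : R) x 1).
have d_exp := is_derive_expR_comp
  (is_deriveB_pt dx (is_deriveM_pt dx (is_derive_cst d x 1))).
have [dh _] := is_deriveM_pt d_lin d_exp.
exact/differentiable_continuous/derivable1_diffP.
Qed.

Lemma stab_index_hits1 (a b : R) :
  a <= b -> (h a <= 1 /\ 1 <= h b) \/ (h b <= 1 /\ 1 <= h a) ->
  exists2 c, a <= c <= b & h c = 1.
Proof.
move=> ab hab.
have [|c] := IVT ab (continuous_subspaceT stab_index_continuous) (v := 1).
  by rewrite ge_min le_max; case: hab => [[-> ->] | [-> ->]]; rewrite ?orbT.
by rewrite in_itv /=; exists c.
Qed.

Lemma stab_index_le0 (g : R) : g <= 2^-1 -> h g <= 0.
Proof. by move=> g_le; rewrite /stab_index mulr_le0_ge0 ?expR_ge0 //; lra. Qed.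

Lemma stab_index_incr_le1 (s t : R) : d <= 1 -> 2^-1 <= s -> s < t -> h s < h t.
Proof.
move=> d1 s_ge st; rewrite /stab_index.
have e_le : expR (s - s * d) <= expR (t - t * d) by rewrite ler_expR; nra.
apply: (le_lt_trans (y := (2 * s - 1) * expR (t - t * d))).
  by apply: ler_wpM2l => //; lra.
by rewrite ltr_pM2r ?expR_gt0 //; lra.
Qed.

Section AboveOne.
Hypothesis d_gt1 : 1 < d.
Let c := d - 1.
Let c_gt0 : 0 < c. Proof. by rewrite /c subr_gt0. Qed.

Let expR_shift (s t : R) : expR (t - t * d) = expR (s - s * d) * expR (- (c * (t - s))).
Proof. by rewrite -expRD /c; congr expR; ring. Qed.

Lemma stab_index_incr (s t : R) : 2^-1 <= s -> s < t -> t <= stab_peak -> h s < h t.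
Proof.
rewrite /stab_peak -/c => s_ge st t_le; rewrite /stab_index (expR_shift s t).
have lin : 1 - c * (t - s) < expR (- (c * (t - s))).
  by rewrite expR_gt1Dx // oppr_eq0 mulf_eq0 negb_or !gt_eqF ?subr_gt0.
have ct : c * (2 * t - 1) <= 2.
  by rewrite mulrC -ler_pdivlMr //; lra.
have key : 2 * s - 1 <= (2 * t - 1) * (1 - c * (t - s)) by nra.
rewrite mulrCA [X in X < _]mulrC ltr_pM2l ?expR_gt0 //.
by apply: (le_lt_trans key); rewrite ltr_pM2l //; lra.
Qed.

Lemma stab_index_decr (s t : R) : stab_peak <= s -> s < t -> h t < h s.
Proof.
rewrite /stab_peak -/c => s_ge st; rewrite /stab_index (expR_shift s t).
have lin : 1 + c * (t - s) < expR (c * (t - s)).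
  by rewrite expR_gt1Dx // mulf_eq0 negb_or !gt_eqF ?subr_gt0.
have cs : 2 <= c * (2 * s - 1).
  by rewrite mulrC -ler_pdivrMr //; lra.
have key : 2 * t - 1 <= (2 * s - 1) * (1 + c * (t - s)) by nra.
have s1 : 0 < 2 * s - 1 by have := c_gt0; nra.
rewrite mulrCA [X in _ < X]mulrC ltr_pM2l ?expR_gt0 //.
rewrite -ltr_pdivlMr ?expR_gt0 // expRN invrK.
by apply: (le_lt_trans key); rewrite ltr_pM2l.
Qed.

Lemma stab_index_peak : h stab_peak = 2 / c * expR (- (c / 2) - 1).
Proof.
have c0 : c != 0 by rewrite gt_eqF.
by rewrite /stab_index /stab_peak -/c; congr (_ * expR _); rewrite /c; field; rewrite -/c.
Qed.

Lemma stab_index_eventually_lt1 : exists2 G, stab_peak <= G & h G < 1.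
Proof.
have peak_gt0 : 0 < stab_peak by rewrite /stab_peak -/c addr_gt0 ?invr_gt0.
(* Beyond 8 / c^2, e^{cG} >= (cG)^2 / 2 >= 4G outgrows 2G - 1. *)
exists (stab_peak + 8 / c ^+ 2); first by rewrite lerDl divr_ge0 ?sqr_ge0.
set G := _ + _; have G_gt0 : 0 < G by rewrite /G addr_gt0 ?divr_gt0 ?exprn_gt0.
have cG : 8 * G <= (c * G) ^+ 2.
  have : 8 / c ^+ 2 <= G by rewrite /G; lra.
  rewrite ler_pdivrMr ?exprn_gt0 // => cG8.
  by rewrite exprMn expr2 mulrA ler_pM2r // mulrC.
have := expR_ge1Dxn 1 (ltW (mulr_gt0 c_gt0 G_gt0)).
rewrite /stab_index (_ : G - G * d = - (c * G)); last by rewrite /c; ring.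
rewrite expRN ltr_pdivrMr ?expR_gt0 // mul1r (_ : 2`!%:R = 2 :> R) //; lra.
Qed.

Lemma stab_index_peak_gt1E : (1 < h stab_peak) = (c / 2 < expR (- (c / 2) - 1)).
Proof.
rewrite stab_index_peak (_ : 2 / c * _ = expR (- (c / 2) - 1) / (c / 2)).
  by rewrite ltr_pdivlMr ?divr_gt0 // mul1r.
by field; rewrite gt_eqF.
Qed.

Lemma stab_index_peak_lt1E : (h stab_peak < 1) = (expR (- (c / 2) - 1) < c / 2).
Proof.
rewrite stab_index_peak (_ : 2 / c * _ = expR (- (c / 2) - 1) / (c / 2)).
  by rewrite ltr_pdivrMr ?divr_gt0 // mul1r.
by field; rewrite gt_eqF.
Qed.

End AboveOne.

Lemma stab_threshold_le1 : d <= 1 -> exists gc, [/\ 2^-1 <= gc <= 1,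
  forall g, g < gc -> h g < 1, forall g, gc < g -> 1 < h g & d = 1 -> gc = 1].
Proof.
move=> d_le1.
have h1 : 1 <= h 1.
  rewrite /stab_index mul1r mulr1 (_ : 2 - 1 = 1 :> R) ?mul1r; last lra.
  by apply: le_trans (expR_ge1Dx _); lra.
have half_le1 : 2^-1 <= 1 :> R by rewrite invf_le1; lra.
have h_half : h 2^-1 <= 1 by rewrite (le_trans (stab_index_le0 _)).
have [gc gc_range hgc] := stab_index_hits1 half_le1 (or_introl (conj h_half h1)).
have /andP [gc_lo _] := gc_range.
exists gc; split => //.
- move=> g g_lt; have [/stab_index_le0|g_gt] := lerP g 2^-1; first lra.
  by rewrite -hgc stab_index_incr_le1 // ltW.
- by move=> g g_gt; rewrite -hgc stab_index_incr_le1.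
- by move=> d1; move: hgc; rewrite /stab_index d1 mulr1 subrr expR0 mulr1; lra.
Qed.

Lemma stab_window_gt1 : 1 < d -> 1 < h stab_peak -> exists g1 g2, [/\ 2^-1 < g1 < g2,
  forall g, (1 < h g) = (g1 < g < g2) & forall g, g < g1 \/ g2 < g -> h g < 1].
Proof.
move=> d_gt1 h_peak.
have half_le_peak : 2^-1 <= stab_peak by rewrite /stab_peak lerDl invr_ge0; lra.
have h_half : h 2^-1 <= 1 by rewrite (le_trans (stab_index_le0 _)).
have [G peak_le_G hG] := stab_index_eventually_lt1 d_gt1.
have [g1 /andP [g1_lo g1_hi] hg1] :=
  stab_index_hits1 half_le_peak (or_introl (conj h_half (ltW h_peak))).
have [g2 /andP [g2_lo g2_hi] hg2] :=
  stab_index_hits1 peak_le_G (or_intror (conj (ltW hG) (ltW h_peak))).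
have g1_lt : g1 < stab_peak.
  by rewrite lt_neqAle g1_hi andbT; apply/eqP => e; move: h_peak; rewrite -e hg1 ltxx.
have g2_gt : stab_peak < g2.
  by rewrite lt_neqAle g2_lo andbT; apply/eqP => e; move: h_peak; rewrite e hg2 ltxx.
have g1_gt : 2^-1 < g1.
  rewrite lt_neqAle g1_lo andbT; apply/eqP => e.
  by move: (stab_index_le0 (lexx (2^-1 : R))); rewrite e hg1; lra.
have below g : g < g1 -> h g < 1.
  move=> g_lt; have [/stab_index_le0|g_gt] := lerP g 2^-1; first lra.
  by rewrite -hg1 stab_index_incr // ?ltW.
have above g : g2 < g -> h g < 1 by move=> g_gt; rewrite -hg2 stab_index_decr // ltW.
have outside g : (g <= g1) || (g2 <= g) -> h g <= 1.
  case/orP => [|]; rewrite le_eqVlt => /orP [/eqP e|].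
  - by rewrite e hg1.
  - by move/below/ltW.
  - by rewrite -e hg2.
  - by move/above/ltW.
exists g1, g2; split => //; first by rewrite g1_gt (lt_trans g1_lt g2_gt).
- move=> g; apply/idP/idP => [hg | /andP [g1_lt_g g_lt_g2]].
    by rewrite !ltNge -negb_or; apply/negP => /outside; rewrite leNgt hg.
  have [g_le|g_gt] := lerP g stab_peak; first by rewrite -hg1 stab_index_incr // ltW.
  by rewrite -hg2 stab_index_decr // ltW.
- by move=> g [/below|/above].
Qed.

Lemma stab_index_lt1 : 1 < d -> h stab_peak < 1 -> forall g, h g < 1.
Proof.
move=> d_gt1 h_peak g; have [/stab_index_le0|g_gt] := lerP g 2^-1; first lra.
have [g_lt|g_gt'|->] := ltrgtP g stab_peak => //.
- by apply: lt_trans h_peak; rewrite stab_index_incr // ltW.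
- by apply: lt_trans h_peak; rewrite stab_index_decr.
Qed.

End StabIndex.

Section NegativeRoot.
Variable R : realType.
Implicit Types y d : R.

Lemma expR_half_root y : y < 0 -> expR (y - 2) = y ^+ 2 / 4 -> expR (y / 2 - 1) = - y / 2.
Proof.
move=> y_lt0 y_root; have y2_ge0 : 0 <= - y / 2 by lra.
apply/eqP; rewrite -(eqrXn2 (n := 2)) ?expR_ge0 // -expRM_natr.
by rewrite (_ : (y / 2 - 1) * 2%:R = y - 2) ?y_root; [apply/eqP; field | field].
Qed.

Lemma stab_index_peak_gt1 y d : y < 0 -> expR (y - 2) = y ^+ 2 / 4 ->
  1 < d < 1 - y -> 1 < stab_index d (stab_peak d).
Proof.
move=> y_lt0 y_root /andP [d_gt1 d_lt]; rewrite stab_index_peak_gt1E //.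
have : - y / 2 < expR (- ((d - 1) / 2) - 1).
  by rewrite -(expR_half_root y_lt0 y_root) ltr_expR; lra.
lra.
Qed.

Lemma stab_index_peak_lt1 y d : y < 0 -> expR (y - 2) = y ^+ 2 / 4 ->
  1 - y < d -> stab_index d (stab_peak d) < 1.
Proof.
move=> y_lt0 y_root d_gt; rewrite stab_index_peak_lt1E; last lra.
have : expR (- ((d - 1) / 2) - 1) < - y / 2.
  by rewrite -(expR_half_root y_lt0 y_root) ltr_expR; lra.
lra.
Qed.

End NegativeRoot.

Theorem theorem5 (R : realType) (n : nat) (y : R) :
  (0 < n)%N ->
  y < 0 -> expR (y - 2) = y ^+ 2 / 4 ->
  (* (1) *)
  (forall delta : R, 0 <= delta <= 1 ->
     exists gc : R, 0 < gc /\
       (forall gamma : R, 0 <= gamma < gc ->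
          lin_stable (jacP gamma delta (@harmonic_state R n))) /\
       (forall gamma : R, gc < gamma ->
          lin_unstable (jacP gamma delta (@harmonic_state R n))) /\
       (delta = 1 -> gc = 1)) /\
  (* (2) *)
  (forall delta : R, 1 < delta < 1 - y ->
     exists g1 g2 : R, 0 < g1 /\ 0 < g2 /\
       (forall gamma : R, 0 <= gamma ->
          (lin_unstable (jacP gamma delta (@harmonic_state R n)) <-> g1 < gamma < g2)) /\
       (forall gamma : R, 0 <= gamma -> (gamma < g1 \/ g2 < gamma) ->
          lin_stable (jacP gamma delta (@harmonic_state R n)))) /\
  (* (3) *)
  (forall delta : R, 1 - y < delta ->
     forall gamma : R, 0 < gamma ->
       lin_stable (jacP gamma delta (@harmonic_state R n))).
Proof.
move=> n_gt0 y_lt0 y_root; split; [|split].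
- move=> d /andP [_ d_le1].
  have [gc [/andP [gc_lo _] below above gc1]] := stab_threshold_le1 d_le1.
  exists gc; split; first lra.
  split; first by move=> g /andP [_ /below]; apply: harmonic_stable.
  by split=> // g g_gt; rewrite harmonic_unstableE // above.
- move=> d d_range; have /andP [d_gt1 _] := d_range.
  have [g1 [g2 [/andP [g1_gt g12] inside outside]]] :=
    stab_window_gt1 d_gt1 (stab_index_peak_gt1 y_lt0 y_root d_range).
  exists g1, g2; split; first lra.
  split; first lra.
  split=> g _; first by rewrite harmonic_unstableE // inside.
  by move/outside; apply: harmonic_stable.
- move=> d d_gt g _; apply/harmonic_stable/stab_index_lt1; first lra.
  exact: stab_index_peak_lt1 y_lt0 y_root d_gt.
Qed.
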